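(* Let $A, B, C, F \in \mathbb{R}^{n\times n}$ with $C$ invertible, and consider the matrix equation $$AX + B\lvert CX\rvert = F$$ in the unknown $X \in \mathbb{R}^{n\times n}$. Let $I$ be the $n\times n$ identity matrix and set $R = I\otimes AC^{-1}$ and $S = I\otimes B$. Suppose each diagonal entry of $R+S$ has the same sign as the corresponding diagonal entry of $R-S$. Then the equation has exactly one solution if either of the following holds: (i) $R+S$ and $R-S$ are both strictly diagonally dominant by columns; (ii) $R+S$, $R-S$ and all column representative matrices of $\{R+S, R-S\}$ are irreducibly diagonally dominant by columns.
   Context: $\otimes$ denotes the Kronecker product and $\lvert M\rvert$ the entrywise absolute value. For a set $\{M_1,M_2\}$ of $N\times N$ matrices, a column representative is a matrix whose $j$-th column is either the $j$-th column of $M_1$ or the $j$-th column of $M_2$, for each $j=1,\dots,N$. *)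

From HB Require Import structures.
From mathcomp Require Import all_boot all_order all_algebra.
From mathcomp Require Export mxtens.
From mathcomp Require Import reals.
Set Implicit Arguments. Unset Strict Implicit. Unset Printing Implicit Defensive.
Import Order.TTheory GRing.Theory Num.Theory.
Local Open Scope ring_scope.

Definition mxabs {R : numDomainType} {m n : nat} (M : 'M[R]_(m, n)) : 'M[R]_(m, n) :=
  map_mx (fun x => `|x|) M.

Definition sdd_col {R : numDomainType} {N : nat} (M : 'M[R]_N) : Prop :=
  forall j : 'I_N, \sum_(i < N | i != j) `|M i j| < `|M j j|.

Definition dd_col {R : numDomainType} {N : nat} (M : 'M[R]_N) : Prop :=
  forall j : 'I_N, \sum_(i < N | i != j) `|M i j| <= `|M j j|.

(* irreducibility: M is not permutation-similar to a block upper triangular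
   matrix [[M11, M12],[0, M22]] with nonempty square diagonal blocks, i.e.
   for no nonempty proper index set J do we have M i j = 0 for all i in J,
   j not in J. *)
Definition irreducible_mx {R : numDomainType} {N : nat} (M : 'M[R]_N) : Prop :=
  forall J : {set 'I_N}, J != set0 -> J != setT ->
    exists i j, [/\ i \in J, j \notin J & M i j != 0].

Definition idd_col {R : numDomainType} {N : nat} (M : 'M[R]_N) : Prop :=
  [/\ irreducible_mx M, dd_col M &
      exists j : 'I_N, \sum_(i < N | i != j) `|M i j| < `|M j j|].

Definition col_rep {R : Type} {m n : nat} (M1 M2 : 'M[R]_(m, n)) (b : 'I_n -> bool)
  : 'M[R]_(m, n) := \matrix_(i, j) (if b j then M1 i j else M2 i j).

From HB Require Import structures.
From mathcomp Require Import all_boot all_order all_algebra.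
From mathcomp Require Import mxtens reals.
From mathcomp Require Import all_classical all_analysis.
From mathcomp Require Import lra zify.
Set Implicit Arguments. Unset Strict Implicit. Unset Printing Implicit Defensive.
Import Order.TTheory GRing.Theory Num.Theory.
Import numFieldNormedType.Exports.

Local Open Scope ring_scope.

(* Put P = R + S and Q = R - S.  With z+ = max(z, 0) and z- = min(z, 0) we have
   z = z+ + z- and |z| = z+ - z-, so after vectorising, z = vec (C X), the
   equation reads P z+ + Q z- = vec F.  Positive and negative parts move in the
   same direction as z, hence |z+ - w+|_1 + |z- - w-|_1 = |z - w|_1.  For E the
   diagonal matrix of the (common) signs of the diagonals of P and Q and a > 0
   small, the map z |-> z - a E (P z+ + Q z- - vec F) therefore moves z - w to
   (I - a E P) (z+ - w+) + (I - a E Q) (z- - w-), and column diagonal dominance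
   makes every column sum of I - a E P and I - a E Q smaller than 1: the map is
   a contraction for the l1 norm, and its fixed points are the solutions.
   Case (ii) adds nothing: I (x) M is block diagonal, hence reducible when
   n >= 2, and for n <= 1 irreducible dominance is strict dominance. *)

Section Norm1.
Variable R : realDomainType.

Definition norm1 {m} (v : 'cV[R]_m) : R := \sum_i `|v i 0|.

Definition colnorm {m n} (M : 'M[R]_(m, n)) : R := \big[Num.max/0]_j \sum_i `|M i j|.

Lemma norm1_ge0 m (v : 'cV[R]_m) : 0 <= norm1 v.
Proof. exact: sumr_ge0. Qed.

Lemma norm1_eq0 m (v : 'cV[R]_m) : norm1 v = 0 -> v = 0.
Proof.
move=> /psumr_eq0P v0; apply/matrixP => i j; rewrite (ord1 j) mxE.
exact/normr0_eq0/v0.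
Qed.

Lemma norm1D m (u v : 'cV[R]_m) : norm1 (u + v) <= norm1 u + norm1 v.
Proof. by rewrite -big_split; apply: ler_sum => i _; rewrite mxE ler_normD. Qed.

Lemma norm1_mulmx m n (M : 'M[R]_(m, n)) (v : 'cV[R]_n) :
  norm1 (M *m v) <= colnorm M * norm1 v.
Proof.
rewrite /norm1 mulr_sumr.
apply: (@le_trans _ _ (\sum_i \sum_j `|M i j| * `|v j 0|)).
  apply: ler_sum => i _; rewrite mxE; apply: le_trans (ler_norm_sum _ _ _) _.
  by apply: ler_sum => j _; rewrite normrM.
rewrite exchange_big /=; apply: ler_sum => j _.
by rewrite -mulr_suml ler_wpM2r // le_bigmax.
Qed.

Lemma colnorm_lt m n (M : 'M[R]_(m, n)) c :
  0 < c -> (forall j, \sum_i `|M i j| < c) -> colnorm M < c.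
Proof. by move=> c_gt0 Mc; apply: bigmax_lt. Qed.

Lemma colnorm_ge0 m n (M : 'M[R]_(m, n)) : 0 <= colnorm M.
Proof. exact: bigmax_ge_id. Qed.

Lemma mx_norm_le_norm1 m (v : 'cV[R]_m) : `|v| <= norm1 v.
Proof.
rewrite -[`|v|]/(mx_norm v) mx_normrE; apply: bigmax_le => [|[i j] _ /=].
  exact: norm1_ge0.
by rewrite (ord1 j) /norm1 (bigD1 i) //= lerDl sumr_ge0.
Qed.

Lemma norm1_le_mx_norm m (v : 'cV[R]_m) : norm1 v <= m%:R * `|v|.
Proof.
rewrite /norm1 mulr_natl -[X in X *+ m]mulr1 -[m in _ *+ m]card_ord -sumr_const.
apply: ler_sum => i _; rewrite mulr1 -[`|v|]/(mx_norm v) mx_normrE.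
exact: (le_bigmax _ _ (i, 0)).
Qed.

End Norm1.

Lemma exists_expr_mul_lt1 (R : realType) (q c : R) :
  `|q| < 1 -> exists k, q ^+ k * c < 1.
Proof.
move=> q_lt1; have qc0 : ((fun k => q ^+ k * c) @ \oo --> 0)%classic.
  by rewrite -(mul0r c); apply: cvgM (cvg_expr q_lt1) (cvg_cst c).
have [k _ small] := (cvgrPdist_lt _ _).1 qc0 1 ltr01.
exists k; have := small k (leqnn k); rewrite /= sub0r normrN.
exact/le_lt_trans/ler_norm.
Qed.

(* 'cV[R]_m is not inferred to be a complete normed module (the join is not
   declared); this alias carries that structure. *)
Definition cvec (R : realType) (m : nat) := 'cV[R]_m.
HB.instance Definition _ (R : realType) m := NormedModule.copy (cvec R m) 'cV[R]_m.
HB.instance Definition _ (R : realType) m := Complete.copy (cvec R m) 'cV[R]_m.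

Section Norm1Contraction.
Variables (R : realType) (m : nat) (f : 'cV[R]_m -> 'cV[R]_m) (q : R).
Hypotheses (q_ge0 : 0 <= q) (q_lt1 : q < 1)
  (f_contr : forall z w, norm1 (f z - f w) <= q * norm1 (z - w)).

Lemma norm1_iter_contraction k z w :
  norm1 (iter k f z - iter k f w) <= q ^+ k * norm1 (z - w).
Proof.
elim: k z w => [|k IHk] z w /=; first by rewrite mul1r.
by rewrite exprS -mulrA; apply: le_trans (f_contr _ _) _; rewrite ler_wpM2l.
Qed.

Lemma norm1_contraction_fixpoint_unique z w : f z = z -> f w = w -> z = w.
Proof.
move=> fz fw; have := f_contr z w; rewrite fz fw => zw_contr.
apply/eqP; rewrite -subr_eq0; apply/eqP/norm1_eq0.
have : norm1 (z - w) * (1 - q) <= 0 by rewrite mulrBr mulr1 subr_le0 mulrC.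
by rewrite pmulr_lle0 ?subr_gt0 // => zw_le0; apply/le_anti; rewrite zw_le0 norm1_ge0.
Qed.

Lemma norm1_contraction_fixpoint : exists z, f z = z.
Proof.
(* Banach's theorem is stated for the max norm; since |v| <= |v|_1 <= m |v|,
   a high enough iterate of f is a contraction for it. *)
have [k qk_lt1] : exists k, q ^+ k * m%:R < 1.
  by apply: exists_expr_mul_lt1; rewrite ger0_norm.
pose g : {fun [set: cvec R m]%classic >-> [set: cvec R m]%classic} :=
  totalfun (iter k f).
have g_contr : is_contraction g.
  exists (NngNum (mulr_ge0 (exprn_ge0 k q_ge0) (ler0n R m))).
  split=> //= -[x y] _ /=; apply: le_trans (mx_norm_le_norm1 _) _.
  apply: le_trans (norm1_iter_contraction _ _ _) _.
  by rewrite -mulrA ler_wpM2l ?exprn_ge0 ?norm1_le_mx_norm.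
have [p _ gp] := banach_fixed_point g_contr closedT (ex_intro _ 0 I).
exists p; apply/esym/(contraction_fixpoint_unique g_contr) => //=.
by rewrite {1}gp /totalfun_ -iterSr iterS.
Qed.

End Norm1Contraction.

Section PositiveNegativeParts.
Variable R : realDomainType.

Definition mxpos {m n} (M : 'M[R]_(m, n)) := map_mx (fun x => Num.max x 0) M.
Definition mxneg {m n} (M : 'M[R]_(m, n)) := map_mx (fun x => Num.min x 0) M.

Lemma mxpos_add_mxneg m n (M : 'M[R]_(m, n)) : mxpos M + mxneg M = M.
Proof. by apply/matrixP => i j; rewrite !mxE addr_max_min addr0. Qed.

Lemma mxpos_sub_mxneg m n (M : 'M[R]_(m, n)) : mxpos M - mxneg M = mxabs M.
Proof.
apply/matrixP => i j; rewrite !mxE.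
case: (leP 0 (M i j)) => [Mij_ge0 | /ltW Mij_le0].
  by rewrite subr0 ger0_norm.
by rewrite sub0r ler0_norm.
Qed.

Lemma mulmx_abs_split m n (A B : 'M[R]_(m, n)) (z : 'cV[R]_n) :
  A *m z + B *m mxabs z = (A + B) *m mxpos z + (A - B) *m mxneg z.
Proof.
rewrite -mxpos_sub_mxneg -{1}(mxpos_add_mxneg z) mulmxDr mulmxBr addrACA.
by rewrite mulmxDl mulmxBl.
Qed.

Lemma dist_max0_add_dist_min0 (x y : R) :
  `|Num.max x 0 - Num.max y 0| + `|Num.min x 0 - Num.min y 0| = `|x - y|.
Proof.
wlog xy : x y / x <= y.
  move=> wlog; case: (leP x y) => [/wlog // | /ltW/wlog].
  by rewrite (distrC (Num.max y 0)) (distrC (Num.min y 0)) (distrC y).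
have max_le : Num.max x 0 <= Num.max y 0 by rewrite le_max2.
have min_le : Num.min x 0 <= Num.min y 0 by rewrite le_min2.
rewrite !ler0_norm ?subr_le0 //.
by rewrite -opprD addrACA -opprD !addr_max_min !addr0.
Qed.

Lemma norm1_mxpos_add_mxneg m (z w : 'cV[R]_m) :
  norm1 (mxpos z - mxpos w) + norm1 (mxneg z - mxneg w) = norm1 (z - w).
Proof.
by rewrite -big_split; apply: eq_bigr => i _; rewrite !mxE /= dist_max0_add_dist_min0.
Qed.

End PositiveNegativeParts.

Lemma colsum_1_sub_diag_mul (R : realDomainType) n (M : 'M[R]_n) (e : 'rV[R]_n) a j :
  (forall i, `|e 0 i| <= a) -> e 0 j * M j j = a * `|M j j| -> a * `|M j j| <= 1 ->
  \sum_i `|(1%:M - diag_mx e *m M) i j|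
    <= 1 - a * (`|M j j| - \sum_(i | i != j) `|M i j|).
Proof.
move=> e_le ejj ajj_le1; rewrite mul_diag_mx (bigD1 j) //= !mxE eqxx mulr1n ejj.
have offdiag : \sum_(i | i != j) `|(1%:M - \matrix_(i, j) (e 0 i * M i j)) i j|
    <= a * \sum_(i | i != j) `|M i j|.
  rewrite mulr_sumr; apply: ler_sum => i ij.
  by rewrite !mxE (negbTE ij) sub0r normrN normrM ler_wpM2r.
by rewrite ger0_norm ?subr_ge0 //; lra.
Qed.

Section AbsoluteValueEquation.
Variables (R : realType) (N : nat) (P Q : 'M[R]_N).
Hypotheses (P_sdd : sdd_col P) (Q_sdd : sdd_col Q)
  (sg_PQ : forall i, Num.sg (P i i) = Num.sg (Q i i)).

(* Any a > 0 with a |P i i| <= 1 and a |Q i i| <= 1 for all i would do. *)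
Let a : R := (1 + \sum_i (`|P i i| + `|Q i i|))^-1.
Let D : 'M[R]_N := diag_mx (\row_i (a * Num.sg (P i i))).
Let q : R := Num.max (colnorm (1%:M - D *m P)) (colnorm (1%:M - D *m Q)).

Definition ave_step (g z : 'cV[R]_N) := z - D *m (P *m mxpos z + Q *m mxneg z - g).

Let a_gt0 : 0 < a.
Proof.
by rewrite invr_gt0 ltr_wpDr // sumr_ge0 // => i _; rewrite addr_ge0.
Qed.

Let a_diag_le1 (M : 'M[R]_N) i : `|M i i| <= `|P i i| + `|Q i i| -> a * `|M i i| <= 1.
Proof.
move=> Mii_le; rewrite mulrC ler_pdivrMr ?mul1r; last by rewrite -invr_gt0.
apply: le_trans Mii_le _; rewrite (bigD1 i) //=.
have : 0 <= \sum_(k | k != i) (`|P k k| + `|Q k k|).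
  by rewrite sumr_ge0 // => k _; rewrite addr_ge0.
lra.
Qed.

Let sdd_col_diag_neq0 (M : 'M[R]_N) i : sdd_col M -> M i i != 0.
Proof. by move=> /(_ i); rewrite -normr_gt0; apply: le_lt_trans; exact: sumr_ge0. Qed.

Let colnorm_1_sub_DM_lt1 (M : 'M[R]_N) :
  sdd_col M -> (forall i, Num.sg (M i i) = Num.sg (P i i)) ->
  (forall i, `|M i i| <= `|P i i| + `|Q i i|) -> colnorm (1%:M - D *m M) < 1.
Proof.
move=> M_sdd sgM Mii_le; apply: colnorm_lt => // j.
apply: le_lt_trans (colsum_1_sub_diag_mul (a := a) _ _ _) _.
- move=> i; rewrite mxE normrM normr_sg (gtr0_norm a_gt0).
  by rewrite ger_pMr // lern1 leq_b1.
- by rewrite mxE -sgM -mulrA -normrEsg.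
- exact: a_diag_le1.
- by have := M_sdd j; rewrite -subr_gt0 => /(mulr_gt0 a_gt0); lra.
Qed.

Lemma ave_step_rate_lt1 : q < 1.
Proof.
rewrite gt_max !colnorm_1_sub_DM_lt1 // => i; rewrite ?sg_PQ //.
- by rewrite lerDr.
- by rewrite lerDl.
Qed.

Lemma ave_stepE g z : ave_step g z =
  (1%:M - D *m P) *m mxpos z + (1%:M - D *m Q) *m mxneg z + D *m g.
Proof.
rewrite /ave_step !mulmxBl !mul1mx mulmxBr mulmxDr -!mulmxA.
by rewrite -{1}(mxpos_add_mxneg z) opprD opprK opprD addrA addrACA.
Qed.

Lemma ave_step_contraction g z w :
  norm1 (ave_step g z - ave_step g w) <= q * norm1 (z - w).
Proof.
rewrite !ave_stepE opprD addrACA subrr addr0 opprD addrACA -!mulmxBr.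
rewrite -norm1_mxpos_add_mxneg mulrDr.
apply: le_trans (norm1D _ _) _.
apply: le_trans (lerD (norm1_mulmx _ _) (norm1_mulmx _ _)) _.
by rewrite lerD // ler_wpM2r ?norm1_ge0 // le_max lexx ?orbT.
Qed.

Lemma ave_step_fixpointP g z :
  ave_step g z = z <-> P *m mxpos z + Q *m mxneg z = g.
Proof.
rewrite /ave_step; split=> [|->]; last by rewrite subrr mulmx0 subr0.
move=> /eqP; rewrite subr_eq addrC -subr_eq subrr eq_sym => /eqP D_eq0.
apply/eqP; rewrite -subr_eq0; apply/eqP/matrixP => i j; rewrite (ord1 j).
have := congr1 (fun v : 'cV[R]_N => v i 0) D_eq0; rewrite mul_diag_mx !mxE.
move=> /eqP; rewrite !mulf_eq0 (gt_eqF a_gt0) sgr_eq0.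
by rewrite (negbTE (sdd_col_diag_neq0 _ P_sdd)) => /eqP.
Qed.

Theorem ave_exists_unique g :
  exists! z : 'cV[R]_N, P *m mxpos z + Q *m mxneg z = g.
Proof.
have q_ge0 : 0 <= q by rewrite le_max colnorm_ge0.
have step_contr := @ave_step_contraction g.
have [z z_fix] := norm1_contraction_fixpoint q_ge0 ave_step_rate_lt1 step_contr.
exists z; split=> [|w /ave_step_fixpointP w_fix]; first exact/ave_step_fixpointP.
exact: (norm1_contraction_fixpoint_unique ave_step_rate_lt1 step_contr z_fix w_fix).
Qed.

End AbsoluteValueEquation.

Definition vecmx {R : Type} {m n} (Y : 'M[R]_(m, n)) : 'cV[R]_(n * m) :=
  \col_k Y (mxtens_unindex k).2 (mxtens_unindex k).1.

Definition unvecmx {R : Type} {m n} (z : 'cV[R]_(n * m)) : 'M[R]_(m, n) :=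
  \matrix_(i, j) z (mxtens_index (j, i)) 0.

Lemma vecmxK {R : Type} {m n : nat} : cancel (@vecmx R m n) unvecmx.
Proof. by move=> Y; apply/matrixP => i j; rewrite !mxE mxtens_indexK. Qed.

Lemma unvecmxK {R : Type} {m n : nat} : cancel (@unvecmx R m n) vecmx.
Proof.
move=> z; apply/matrixP => k l; rewrite (ord1 l) !mxE.
by case: (mxtens_indexP k) => j i; rewrite mxtens_indexK.
Qed.

Lemma vecmxD (R : nmodType) m n (X Y : 'M[R]_(m, n)) :
  vecmx (X + Y) = vecmx X + vecmx Y.
Proof. by apply/matrixP => k l; rewrite !mxE. Qed.

Lemma vecmx_abs (R : numDomainType) m n (Y : 'M[R]_(m, n)) :
  vecmx (mxabs Y) = mxabs (vecmx Y).
Proof. by apply/matrixP => k l; rewrite !mxE. Qed.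

Lemma tens1mx_mulmx_vecmx (R : pzRingType) m n p
    (M : 'M[R]_(p, m)) (Y : 'M[R]_(m, n)) :
  (1%:M *t M) *m vecmx Y = vecmx (M *m Y).
Proof.
apply/matrixP => k l; rewrite (ord1 l); case: (mxtens_indexP k) => j i.
rewrite !mxE mxtens_indexK /= (reindex (@mxtens_index n m)) /=; last first.
  by exists (@mxtens_unindex n m) => x _; rewrite (mxtens_indexK, mxtens_unindexK).
pose G c d := (1%:M *t M) (mxtens_index (j, i)) (mxtens_index (c, d))
  * vecmx Y (mxtens_index (c, d)) 0.
rewrite (eq_bigr (fun x => G x.1 x.2)) => [|[] //].
rewrite -pair_bigA (bigD1 j) //= [X in _ + X]big1 ?addr0 => [|c cj]; last first.
  by apply: big1 => d _; rewrite /G tensmxE mxE eq_sym (negbTE cj) !mul0r.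
by apply: eq_bigr => d _; rewrite /G tensmxE !mxE mxtens_indexK eqxx mul1r.
Qed.

Definition block_diag_mx {R : zmodType} m n (X : 'M[R]_(m * n)) : Prop :=
  forall a b c d, a != c -> X (mxtens_index (a, b)) (mxtens_index (c, d)) = 0.

Lemma block_diag_tens1mx (R : pzRingType) m n (M : 'M[R]_n) :
  block_diag_mx ((1%:M : 'M[R]_m) *t M).
Proof. by move=> a b c d ac; rewrite tensmxE mxE (negbTE ac) mul0r. Qed.

Lemma block_diagD (R : zmodType) m n (X Y : 'M[R]_(m * n)) :
  block_diag_mx X -> block_diag_mx Y -> block_diag_mx (X + Y).
Proof. by move=> Xbd Ybd a b c d ac; rewrite mxE Xbd ?Ybd ?addr0. Qed.

Lemma block_diagN (R : zmodType) m n (X : 'M[R]_(m * n)) :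
  block_diag_mx X -> block_diag_mx (- X).
Proof. by move=> Xbd a b c d ac; rewrite mxE Xbd ?oppr0. Qed.

Lemma block_diag_not_irreducible (R : numDomainType) m n (X : 'M[R]_(m * n)) :
  (1 < m)%N -> (0 < n)%N -> block_diag_mx X -> ~ irreducible_mx X.
Proof.
case: m X => [|[|m]] // X _; case: n X => // n X _ Xbd Xirr.
pose J := [set k : 'I_(m.+2 * n.+1) | (mxtens_unindex k).1 == ord0].
have [i [j [iJ jNJ Xij]]] : exists i j, [/\ i \in J, j \notin J & X i j != 0].
  apply: Xirr.
    by apply/set0Pn; exists (mxtens_index (ord0, ord0)); rewrite inE mxtens_indexK.
  apply/negP => /eqP/setP/(_ (mxtens_index (ord_max, ord0))).
  by rewrite !inE mxtens_indexK.
move: iJ jNJ Xij; case: (mxtens_indexP i) => a b; case: (mxtens_indexP j) => c d.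
by rewrite !inE !mxtens_indexK /= => /eqP -> c0; rewrite Xbd ?eqxx // eq_sym.
Qed.

Lemma sdd_col_idd_le1 (R : numDomainType) N (M : 'M[R]_N) :
  (N <= 1)%N -> idd_col M -> sdd_col M.
Proof.
move=> N_le1 [_ _ [j0 Mj0]] j; suff -> : j = j0 by [].
by apply/val_inj => /=; have := ltn_ord j; have := ltn_ord j0; lia.
Qed.

Lemma sdd_col_idd_block_diag (R : numDomainType) n (X : 'M[R]_(n * n)) :
  block_diag_mx X -> idd_col X -> sdd_col X.
Proof.
move=> Xbd Xidd; case: (leqP n 1) => [n_le1 | n_gt1].
  by apply: sdd_col_idd_le1 Xidd; rewrite (leq_trans (leq_mul n_le1 n_le1)).
by case: Xidd => Xirr; have := block_diag_not_irreducible n_gt1 (ltnW n_gt1) Xbd.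
Qed.

Lemma exists_unique_transport (T U : Type) (f : T -> U) (g : U -> T)
    (P : U -> Prop) (Q : T -> Prop) :
  cancel f g -> cancel g f -> (forall t, Q t <-> P (f t)) ->
  (exists! u, P u) -> exists! t, Q t.
Proof.
move=> fK gK QP [u [Pu Puniq]]; exists (g u); split=> [|t /QP/Puniq ftu].
  by apply/QP; rewrite gK.
by rewrite ftu fK.
Qed.

Theorem theorem4p4 (R : realType) (n : nat) (A B C F : 'M[R]_n) :
  C \in unitmx ->
  let Rm := (1%:M : 'M[R]_n) *t (A *m invmx C) in
  let Sm := (1%:M : 'M[R]_n) *t B in
  (forall k : 'I_(n * n), Num.sg ((Rm + Sm) k k) = Num.sg ((Rm - Sm) k k)) ->
  (sdd_col (Rm + Sm) /\ sdd_col (Rm - Sm)) \/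
  (idd_col (Rm + Sm) /\ idd_col (Rm - Sm) /\
   forall b : 'I_(n * n) -> bool, idd_col (col_rep (Rm + Sm) (Rm - Sm) b)) ->
  exists! X : 'M[R]_n, A *m X + B *m mxabs (C *m X) = F.
Proof.
move=> C_unit Rm Sm sg_diag dominance.
have [P_sdd Q_sdd] : sdd_col (Rm + Sm) /\ sdd_col (Rm - Sm).
  case: dominance => [// | [P_idd [Q_idd _]]].
  have Rm_bd : block_diag_mx Rm by exact: block_diag_tens1mx.
  have Sm_bd : block_diag_mx Sm by exact: block_diag_tens1mx.
  split; apply: sdd_col_idd_block_diag => //.
  - exact: block_diagD.
  - by apply: block_diagD => //; exact: block_diagN.
apply: (exists_unique_transport (f := vecmx \o mulmx C)
          (g := mulmx (invmx C) \o unvecmx) _ _ _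
          (ave_exists_unique P_sdd Q_sdd sg_diag (vecmx F))).
- by move=> X /=; rewrite vecmxK mulKmx.
- by move=> z /=; rewrite mulKVmx ?unvecmxK.
move=> X /=; rewrite -mulmx_abs_split -vecmx_abs !tens1mx_mulmx_vecmx -vecmxD.
by rewrite -mulmxA mulKmx //; split=> [-> | /(can_inj vecmxK)].
Qed.
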